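(* Let $G$ be a group satisfying the property $\mathsf{FM}$ and $\nu$ a conjugation-invariant pseudo-norm on $G$. For any elements $g_1,\dots,g_k\in G$ and real numbers $\lambda,s_1,\dots,s_k$, \[ \lim_{n\to\infty}\frac1n\,\nu\big(g_1^{[\lambda s_1n]}\cdots g_k^{[\lambda s_kn]}\big)=|\lambda|\lim_{n\to\infty}\frac1n\,\nu\big(g_1^{[s_1n]}\cdots g_k^{[s_kn]}\big), \] where $[\cdot]$ denotes the integer part.
   Context: A conjugation-invariant pseudo-norm on a group $G$ is a function $\nu\colon G\to\mathbb{R}_{\ge0}$ with $\nu(1)=0$, $\nu(f)=\nu(f^{-1})$, $\nu(fg)\le\nu(f)+\nu(g)$ and $\nu(gfg^{-1})=\nu(f)$ for all $f,g\in G$. Property $\mathsf{FM}$: for a subgroup $H\le G$, let $\nu_H(f)$ be the minimal $k$ such that $f=g_1h_1g_1^{-1}\cdots g_kh_kg_k^{-1}$ ($g_i\in G,h_i\in H$), $\infty$ if none; for $K\subset G$ let $\mathrm{D}^f_H(K)$ be the set of $h_0\in G$ such that for all $g_1,\dots,g_k\in G$ there is $h\in G$ with every element of $hh_0h^{-1}K(hh_0h^{-1})^{-1}$ commuting with every element of $\bigcup_i g_iHg_i^{-1}$. $(G,H)$ satisfies $\mathsf{FM}$ if $\nu_H<\infty$ on $G$ and $\mathrm{D}^f_H(h_1Hh_1^{-1}\cup\dots\cup h_kHh_k^{-1})\ne\emptyset$ for all $h_1,\dots,h_k\in G$; $G$ satisfies $\mathsf{FM}$ if some $(G,H)$ does.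 *)

From Stdlib Require Import Reals ZArith List.
Open Scope R_scope.

Record Group := {
  carrier :> Type;
  gmul : carrier -> carrier -> carrier;
  ginv : carrier -> carrier;
  gone : carrier;
  gmulA : forall x y z, gmul x (gmul y z) = gmul (gmul x y) z;
  gmul1l : forall x, gmul gone x = x;
  gmul1r : forall x, gmul x gone = x;
  gmulVl : forall x, gmul (ginv x) x = gone;
  gmulVr : forall x, gmul x (ginv x) = gone
}.

Arguments gmul {g}.
Arguments ginv {g}.
Arguments gone {g}.

Section GroupDefs.
Variable G : Group.

Definition gconj (g h : G) : G := gmul (gmul g h) (ginv g).

Fixpoint gpow_nat (x : G) (n : nat) : G :=
  match n with O => gone | S m => gmul x (gpow_nat x m) end.

Definition gpow (x : G) (z : Z) : G :=
  match z with
  | Z0 => gone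
  | Zpos p => gpow_nat x (Pos.to_nat p)
  | Zneg p => gpow_nat (ginv x) (Pos.to_nat p)
  end.

Fixpoint prod_list (l : list G) : G :=
  match l with nil => gone | x :: l' => gmul x (prod_list l') end.

Definition gcommute (x y : G) : Prop := gmul x y = gmul y x.

Definition conj_inv_pseudo_norm (nu : G -> R) : Prop :=
  (forall f, 0 <= nu f) /\
  nu gone = 0 /\
  (forall f, nu f = nu (ginv f)) /\
  (forall f g, nu (gmul f g) <= nu f + nu g) /\
  (forall f g, nu (gconj g f) = nu f).

Definition subgroup (H : G -> Prop) : Prop :=
  H gone /\ (forall x y, H x -> H y -> H (gmul x y)) /\ (forall x, H x -> H (ginv x)).

(* f = g_1 h_1 g_1^{-1} ... g_k h_k g_k^{-1} with h_i in H, i.e. nu_H(f) < oo *)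
Definition nuH_finite_at (H : G -> Prop) (f : G) : Prop :=
  exists l : list (G * G),
    Forall (fun p => H (snd p)) l /\
    f = prod_list (map (fun p => gconj (fst p) (snd p)) l).

Definition in_conj_union (H : G -> Prop) (gs : list G) (x : G) : Prop :=
  exists g, In g gs /\ exists z, H z /\ x = gconj g z.

Definition in_Df (H : G -> Prop) (K : G -> Prop) (h0 : G) : Prop :=
  forall gs : list G, exists h : G,
    forall x, K x -> forall y, in_conj_union H gs y ->
      gcommute (gconj (gconj h h0) x) y.

Definition FM_pair (H : G -> Prop) : Prop :=
  subgroup H /\
  (forall f, nuH_finite_at H f) /\
  (forall hs : list G, exists h0, in_Df H (in_conj_union H hs) h0).

Definition FM : Prop := exists H, FM_pair H.

End GroupDefs.

Arguments gpow {G}.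
Arguments prod_list {G}.

(* By FM, every g_i is a product of conjugates of elements of H, and elements of D^f_H provide
   conjugators psi_i such that the conjugates psi_i g_i psi_i^-1 commute pairwise.  Since nu is
   conjugation invariant, conjugating the factors changes nu of the product only by a bounded
   amount.  For commuting factors, F(x) = nu(prod g_i^[s_i x]) is subadditive, Lipschitz and even
   up to additive constants, so by a Fekete-type argument F(x)/x tends to a slope L as x -> +oo
   and F(lam n)/n tends to |lam| L. *)

From Stdlib Require Import Reals ZArith List Lra Lia Classical.
Open Scope R_scope.

Section GroupAlgebra.
Variable G : Group.

Lemma gmul_cancel_l (a x y : G) : gmul a x = gmul a y -> x = y.
Proof.
  intro H. rewrite <- (gmul1l G x), <- (gmul1l G y), <- (gmulVl G a).
  rewrite <- !gmulA, H. reflexivity.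
Qed.

Lemma gmulVK (x y : G) : gmul (ginv x) (gmul x y) = y.
Proof. rewrite gmulA, gmulVl, gmul1l. reflexivity. Qed.

Lemma ginv_unique (x y : G) : gmul x y = gone -> y = ginv x.
Proof. intro H. apply (gmul_cancel_l x). rewrite H, gmulVr. reflexivity. Qed.

Lemma ginv_mul (x y : G) : ginv (gmul x y) = gmul (ginv y) (ginv x).
Proof.
  symmetry. apply ginv_unique.
  rewrite gmulA, <- (gmulA G x y), gmulVr, gmul1r, gmulVr. reflexivity.
Qed.

Lemma gpow_nat_succ_r (x : G) n : gpow_nat G x (S n) = gmul (gpow_nat G x n) x.
Proof.
  induction n; simpl.
  - rewrite gmul1r, gmul1l. reflexivity.
  - simpl in IHn. rewrite <- gmulA, <- IHn. reflexivity.
Qed.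

Lemma gpow_nonneg (x : G) z : (0 <= z)%Z -> gpow x z = gpow_nat G x (Z.to_nat z).
Proof. intro H; destruct z; simpl; try reflexivity. lia. Qed.

Lemma gpow_nonpos (x : G) z : (z <= 0)%Z -> gpow x z = gpow_nat G (ginv x) (Z.to_nat (- z)).
Proof. intro H; destruct z; simpl; try reflexivity. lia. Qed.

Lemma gpow_succ (x : G) z : gpow x (z + 1) = gmul (gpow x z) x.
Proof.
  destruct (Z_le_gt_dec 0 z) as [Hz|Hz].
  - rewrite !gpow_nonneg by lia. replace (Z.to_nat (z + 1)) with (S (Z.to_nat z)) by lia.
    apply gpow_nat_succ_r.
  - rewrite !gpow_nonpos by lia.
    replace (Z.to_nat (- z)) with (S (Z.to_nat (- (z + 1)))) by lia.
    rewrite gpow_nat_succ_r, <- gmulA, gmulVl, gmul1r. reflexivity.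
Qed.

Lemma gpow_pred (x : G) z : gpow x (z - 1) = gmul (gpow x z) (ginv x).
Proof.
  replace z with ((z - 1) + 1)%Z at 2 by ring.
  rewrite gpow_succ, <- gmulA, gmulVr, gmul1r. reflexivity.
Qed.

Lemma gpow_add (x : G) a b : gpow x (a + b) = gmul (gpow x a) (gpow x b).
Proof.
  induction b using Z.peano_ind.
  - rewrite Z.add_0_r. simpl. rewrite gmul1r. reflexivity.
  - replace (a + Z.succ b)%Z with ((a + b) + 1)%Z by lia. unfold Z.succ.
    rewrite !gpow_succ, IHb, gmulA. reflexivity.
  - replace (a + Z.pred b)%Z with ((a + b) - 1)%Z by lia. unfold Z.pred.
    replace (b + -1)%Z with (b - 1)%Z by lia.
    rewrite !gpow_pred, IHb, gmulA. reflexivity.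
Qed.

Lemma gconj_mul (c x y : G) : gconj G c (gmul x y) = gmul (gconj G c x) (gconj G c y).
Proof.
  unfold gconj. rewrite !gmulA. f_equal. f_equal.
  rewrite <- (gmulA G _ (ginv c) c), gmulVl, gmul1r. reflexivity.
Qed.

Lemma gconj_one (c : G) : gconj G c gone = gone.
Proof. unfold gconj. rewrite gmul1r, gmulVr. reflexivity. Qed.

Lemma gconj_inv (c x : G) : gconj G c (ginv x) = ginv (gconj G c x).
Proof. apply ginv_unique. rewrite <- gconj_mul, gmulVr. apply gconj_one. Qed.

Lemma gconj_pow_nat (c x : G) n : gpow_nat G (gconj G c x) n = gconj G c (gpow_nat G x n).
Proof.
  induction n; simpl.
  - now rewrite gconj_one.
  - now rewrite IHn, gconj_mul.
Qed.

Lemma gconj_pow (c x : G) z : gpow (gconj G c x) z = gconj G c (gpow x z).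
Proof.
  destruct z; simpl.
  - now rewrite gconj_one.
  - apply gconj_pow_nat.
  - rewrite <- gconj_inv. apply gconj_pow_nat.
Qed.

Lemma gconj_conj (a b x : G) : gconj G a (gconj G b x) = gconj G (gmul a b) x.
Proof. unfold gconj. rewrite ginv_mul, !gmulA. reflexivity. Qed.

Lemma gconj_prod (c : G) l : gconj G c (prod_list l) = prod_list (map (gconj G c) l).
Proof.
  induction l; simpl.
  - apply gconj_one.
  - now rewrite gconj_mul, IHl.
Qed.

Lemma gcommute_sym (x y : G) : gcommute G x y -> gcommute G y x.
Proof. unfold gcommute; auto. Qed.

Lemma gcommute_one (z : G) : gcommute G gone z.
Proof. unfold gcommute. rewrite gmul1l, gmul1r. reflexivity. Qed.

Lemma gcommute_mul (x y z : G) :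
  gcommute G x z -> gcommute G y z -> gcommute G (gmul x y) z.
Proof.
  unfold gcommute; intros Hx Hy. rewrite <- gmulA, Hy, gmulA, Hx, gmulA. reflexivity.
Qed.

Lemma gcommute_inv (x z : G) : gcommute G x z -> gcommute G (ginv x) z.
Proof.
  unfold gcommute; intro H. apply (gmul_cancel_l x).
  rewrite !gmulA, gmulVr, gmul1l, H, <- gmulA, gmulVr, gmul1r. reflexivity.
Qed.

Lemma gcommute_pow_l (x z : G) a : gcommute G x z -> gcommute G (gpow x a) z.
Proof.
  assert (Hnat : forall y n, gcommute G y z -> gcommute G (gpow_nat G y n) z).
  { intros y n Hy; induction n; simpl; [apply gcommute_one | apply gcommute_mul; auto]. }
  intro H; destruct a; simpl.
  - apply gcommute_one.
  - now apply Hnat.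
  - apply Hnat, gcommute_inv, H.
Qed.

Lemma gcommute_pow (x z : G) a b : gcommute G x z -> gcommute G (gpow x a) (gpow z b).
Proof. intro H. apply gcommute_pow_l, gcommute_sym, gcommute_pow_l, gcommute_sym, H. Qed.

Lemma gcommute_prod (l : list G) (z : G) :
  (forall y, In y l -> gcommute G y z) -> gcommute G (prod_list l) z.
Proof.
  induction l; simpl; intro H.
  - apply gcommute_one.
  - apply gcommute_mul; auto.
Qed.

End GroupAlgebra.

Lemma Rabs_le_inv (a b : R) : Rabs a <= b -> - b <= a <= b.
Proof. intro H. pose proof (Rle_abs a). pose proof (Rle_abs (- a)). rewrite Rabs_Ropp in *. lra. Qed.

Definition quasi_subadditive (g : R -> R) (C : R) : Prop :=
  forall x y, g (x + y) <= g x + g y + C.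

Definition quasi_lipschitz (g : R -> R) (K C : R) : Prop :=
  forall x y, g x <= g y + K * Rabs (x - y) + C.

Definition quasi_even (g : R -> R) (C : R) : Prop := forall x, g (- x) <= g x + C.

Definition quasi_regular (g : R -> R) (K C : R) : Prop :=
  quasi_subadditive g C /\ quasi_lipschitz g K C /\ quasi_even g C.

Definition asymptotic_slope (g : R -> R) (L : R) : Prop :=
  forall e, 0 < e -> exists X, forall x, X <= x -> Rabs (g x - L * x) <= e * x.

Lemma quasi_regular_near (f g : R -> R) (K C D : R) :
  quasi_regular f K C -> (forall x, Rabs (g x - f x) <= D) -> quasi_regular g K (C + 3 * D).
Proof.
  intros (Hsub & Hlip & Hev) Hgf.
  assert (Hgf' : forall x, f x - D <= g x <= f x + D).
  { intro x. specialize (Hgf x). apply Rabs_le_inv in Hgf. lra. }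
  assert (HD : 0 <= D) by (pose proof (Hgf 0); pose proof (Rabs_pos (g 0 - f 0)); lra).
  split; [|split].
  - intros x y. specialize (Hsub x y).
    pose proof (Hgf' (x + y)); pose proof (Hgf' x); pose proof (Hgf' y). lra.
  - intros x y. specialize (Hlip x y). pose proof (Hgf' x); pose proof (Hgf' y). lra.
  - intro x. specialize (Hev x). pose proof (Hgf' x); pose proof (Hgf' (- x)). lra.
Qed.

Lemma inf_ratio_exists (h : R -> R) : (forall x, 0 <= h x) ->
  exists L, 0 <= L /\ (forall x, 0 < x -> L * x <= h x) /\
    (forall e, 0 < e -> exists y, 0 < y /\ h y < (L + e) * y).
Proof.
  intro Hh.
  assert (Hratio : forall x, 0 < x -> 0 <= h x / x).
  { intros x Hx. unfold Rdiv. apply Rmult_le_pos; auto. left; apply Rinv_0_lt_compat; auto. }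
  set (E := fun r => exists x, 0 < x /\ r = - (h x / x)).
  assert (Hb : bound E).
  { exists 0. intros r (x & Hx & ->). specialize (Hratio x Hx). lra. }
  assert (Hne : exists r, E r) by (exists (- (h 1 / 1)); exists 1; split; auto; lra).
  destruct (completeness E Hb Hne) as [m [Hub Hlub]].
  exists (- m). split; [|split].
  - enough (m <= 0) by lra.
    apply Hlub. intros r (x & Hx & ->). specialize (Hratio x Hx). lra.
  - intros x Hx. assert (- (h x / x) <= m) by (apply Hub; exists x; auto).
    assert (h x = (h x / x) * x) by (field; lra). nra.
  - intros e He. apply NNPP. intro Hn.
    enough (m <= m - e) by lra.
    apply Hlub. intros r (x & Hx & ->).
    assert ((- m + e) * x <= h x).
    { apply Rnot_lt_le. intro Hl. apply Hn. exists x; split; auto. }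
    assert (- m + e <= h x / x).
    { apply (Rmult_le_reg_r x); auto. replace (h x / x * x) with (h x) by (field; lra). lra. }
    lra.
Qed.

Lemma floor_decomp (x y : R) : 0 <= x -> 0 < y ->
  exists (m : nat) r, 0 <= r <= y /\ x = INR m * y + r.
Proof.
  intros Hx Hy. set (q := x / y). destruct (base_Int_part q) as [Hq1 Hq2].
  assert (Hq : 0 <= q).
  { unfold q, Rdiv. apply Rmult_le_pos; auto. left; apply Rinv_0_lt_compat; auto. }
  assert (Hk : (0 <= Int_part q)%Z).
  { assert (IZR (-1) < IZR (Int_part q)) by (simpl; lra). apply lt_IZR in H. lia. }
  exists (Z.to_nat (Int_part q)), (x - IZR (Int_part q) * y).
  rewrite INR_IZR_INZ, Z2Nat.id by auto.
  assert (Hxq : x = q * y) by (unfold q; field; lra).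
  split; [split|]; nra.
Qed.

Section QuasiSubadditiveGrowth.

Variables (g : R -> R) (K C : R).
Hypotheses (g_ge0 : forall x, 0 <= g x) (C_ge0 : 0 <= C) (K_ge0 : 0 <= K).
Hypotheses (g_sub : quasi_subadditive g C) (g_lip : quasi_lipschitz g K C).

Lemma quasi_subadditive_multiple (y : R) (m : nat) (r : R) : 0 <= r <= y ->
  g (INR m * y + r) <= INR m * (g y + C) + (g 0 + K * y + C).
Proof.
  intro Hr. induction m.
  - simpl. rewrite !Rmult_0_l, !Rplus_0_l.
    specialize (g_lip r 0). rewrite Rminus_0_r, Rabs_right in g_lip by lra.
    assert (K * r <= K * y) by (apply Rmult_le_compat_l; lra). lra.
  - rewrite S_INR. replace ((INR m + 1) * y + r) with ((INR m * y + r) + y) by ring.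
    specialize (g_sub (INR m * y + r) y). lra.
Qed.

Lemma exists_asymptotic_slope : exists L, asymptotic_slope g L.
Proof.
  (* The slope is inf_{x > 0} (g x + C) / x; note that g + C is exactly subadditive. *)
  destruct (inf_ratio_exists (fun x => g x + C)) as (L & HL0 & Hlow & Hup).
  { intro x. specialize (g_ge0 x). lra. }
  exists L. intros e He.
  destruct (Hup (e / 2)) as (y & Hy & Hgy); [lra|].
  set (M := g 0 + K * y + C).
  assert (HM : 0 <= M).
  { unfold M. specialize (g_ge0 0). assert (0 <= K * y) by (apply Rmult_le_pos; lra). lra. }
  assert (HMe : 0 <= 2 * (M + C) / e).
  { unfold Rdiv. apply Rmult_le_pos; [lra | left; apply Rinv_0_lt_compat; lra]. }
  exists (2 * (M + C) / e + 1). intros x Hx.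
  assert (Hex : 2 * (M + C) + e <= e * x).
  { replace (2 * (M + C) + e) with (e * (2 * (M + C) / e + 1)) by (field; lra).
    apply Rmult_le_compat_l; lra. }
  destruct (floor_decomp x y) as (m & r & Hr & Hxr); try lra.
  pose proof (quasi_subadditive_multiple y m r Hr) as Hm. rewrite <- Hxr in Hm. fold M in Hm.
  assert (Hm0 : 0 <= INR m) by apply pos_INR.
  assert (INR m * (g y + C) <= INR m * ((L + e / 2) * y)) by (apply Rmult_le_compat_l; lra).
  assert ((L + e / 2) * (INR m * y) <= (L + e / 2) * x).
  { apply Rmult_le_compat_l; [lra|]. assert (0 <= r) by lra. lra. }
  pose proof (Hlow x ltac:(lra)).
  apply Rabs_le. split; nra.
Qed.

End QuasiSubadditiveGrowth.

Lemma asymptotic_slope_along (g : R -> R) (L a : R) : asymptotic_slope g L -> 0 <= a ->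
  forall eps, 0 < eps -> exists N, forall n, (N <= n)%nat ->
    Rabs (g (a * INR n) - a * L * INR n) <= eps * INR n.
Proof.
  intros HL Ha eps He. destruct (Req_dec a 0) as [Ha0|Ha0].
  - destruct (INR_archimed eps (Rabs (g 0)) He) as [N HN].
    exists N. intros n Hn. rewrite Ha0, !Rmult_0_l, Rminus_0_r.
    apply le_INR in Hn. assert (eps * INR N <= eps * INR n) by (apply Rmult_le_compat_l; lra).
    lra.
  - assert (Hap : 0 < a) by lra.
    destruct (HL (eps / a)) as (X & HX).
    { unfold Rdiv; apply Rmult_lt_0_compat; auto. apply Rinv_0_lt_compat; auto. }
    destruct (INR_archimed a X Hap) as [N HN].
    exists N. intros n Hn. apply le_INR in Hn.
    assert (HXn : X <= a * INR n).
    { assert (a * INR N <= a * INR n) by (apply Rmult_le_compat_l; lra). lra. }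
    specialize (HX _ HXn).
    replace (a * L * INR n) with (L * (a * INR n)) by ring.
    replace (eps * INR n) with (eps / a * (a * INR n)) by (field; lra). exact HX.
Qed.

Lemma Un_cv_div_INR (u : nat -> R) (l : R) :
  (forall eps, 0 < eps -> exists N, forall n, (N <= n)%nat -> Rabs (u n - l * INR n) <= eps * INR n) ->
  Un_cv (fun n => u n / INR n) l.
Proof.
  intros Hu eps He. destruct (Hu (eps / 2) ltac:(lra)) as [N HN].
  exists (S N). intros n Hn.
  assert (Hn0 : 1 <= INR n) by (replace 1 with (INR 1) by reflexivity; apply le_INR; lia).
  specialize (HN n ltac:(lia)). unfold R_dist.
  replace (u n / INR n - l) with ((u n - l * INR n) * / INR n) by (field; lra).
  rewrite Rabs_mult, (Rabs_right (/ INR n)) by (apply Rle_ge; left; apply Rinv_0_lt_compat; lra).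
  apply (Rmult_lt_reg_r (INR n)); [lra|].
  rewrite Rmult_assoc, Rinv_l by lra.
  assert (eps / 2 * INR n < eps * INR n) by nra. lra.
Qed.

Lemma quasi_even_const_ge0 (g : R -> R) (C : R) : quasi_even g C -> 0 <= C.
Proof. intro Hev. specialize (Hev 0). rewrite Ropp_0 in Hev. lra. Qed.

Lemma quasi_even_scale (g : R -> R) (C lam x : R) :
  quasi_even g C -> Rabs (g (lam * x) - g (Rabs lam * x)) <= C.
Proof.
  intro Hev. pose proof (quasi_even_const_ge0 g C Hev) as HC.
  destruct (Rle_or_lt 0 lam).
  - rewrite (Rabs_right lam), Rminus_diag, Rabs_R0 by lra. exact HC.
  - rewrite (Rabs_left lam) by lra. apply Rabs_le.
    pose proof (Hev (lam * x)) as H1. pose proof (Hev (- lam * x)) as H2.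
    replace (- (lam * x)) with (- lam * x) in H1 by ring.
    replace (- (- lam * x)) with (lam * x) in H2 by ring. lra.
Qed.

(* Fekete's lemma, up to bounded errors. *)
Lemma quasi_regular_limits (g : R -> R) (K C : R) :
  (forall x, 0 <= g x) -> 0 <= K -> quasi_regular g K C ->
  exists L, forall lam, Un_cv (fun n => g (lam * INR n) / INR n) (Rabs lam * L).
Proof.
  intros Hg HK (Hsub & Hlip & Hev). pose proof (quasi_even_const_ge0 g C Hev) as HC.
  destruct (exists_asymptotic_slope g K C Hg HC HK Hsub Hlip) as [L HL].
  exists L. intro lam. apply Un_cv_div_INR. intros eps He.
  destruct (asymptotic_slope_along g L (Rabs lam) HL (Rabs_pos lam) (eps / 2))
    as [N1 HN1]; [lra|].
  destruct (INR_archimed (eps / 2) C) as [N2 HN2]; [lra|].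
  exists (N1 + N2)%nat. intros n Hn.
  specialize (HN1 n ltac:(lia)).
  pose proof (quasi_even_scale g C lam (INR n) Hev) as Hscale.
  assert (INR N2 * (eps / 2) <= INR n * (eps / 2)).
  { apply Rmult_le_compat_r; [lra|]. apply le_INR; lia. }
  replace (g (lam * INR n) - Rabs lam * L * INR n)
    with ((g (lam * INR n) - g (Rabs lam * INR n)) + (g (Rabs lam * INR n) - Rabs lam * L * INR n))
    by ring.
  eapply Rle_trans; [apply Rabs_triang|]. lra.
Qed.

Definition sumR {A : Type} (l : list A) (f : A -> R) : R :=
  fold_right (fun a r => f a + r) 0 l.

Lemma sumR_ge0 {A : Type} (l : list A) (f : A -> R) : (forall a, 0 <= f a) -> 0 <= sumR l f.
Proof. intro H; induction l; simpl; [lra|]. specialize (H a); lra. Qed.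

Lemma Int_part_add_bounds (x y : R) : (0 <= Int_part (x + y) - Int_part x - Int_part y <= 1)%Z.
Proof.
  destruct (base_Int_part x), (base_Int_part y), (base_Int_part (x + y)).
  assert (IZR (Int_part (x + y)) < IZR (Int_part x + Int_part y + 2)) by (rewrite !plus_IZR; lra).
  assert (IZR (Int_part x + Int_part y - 1) < IZR (Int_part (x + y))).
  { rewrite minus_IZR, plus_IZR. lra. }
  repeat match goal with H : IZR _ < IZR _ |- _ => apply lt_IZR in H end. lia.
Qed.

Lemma Int_part_opp_bounds (x : R) : (-1 <= Int_part (- x) + Int_part x <= 0)%Z.
Proof.
  destruct (base_Int_part x), (base_Int_part (- x)).
  assert (IZR (Int_part (- x)) < IZR (- Int_part x + 1)) by (rewrite plus_IZR, opp_IZR; lra).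
  assert (IZR (- Int_part x - 2) < IZR (Int_part (- x))) by (rewrite minus_IZR, opp_IZR; lra).
  repeat match goal with H : IZR _ < IZR _ |- _ => apply lt_IZR in H end. lia.
Qed.

Lemma Int_part_sub_le (a b : R) : Rabs (IZR (Int_part a - Int_part b)) <= Rabs (a - b) + 1.
Proof.
  destruct (base_Int_part a), (base_Int_part b).
  rewrite minus_IZR. apply Rabs_le.
  pose proof (Rle_abs (a - b)). pose proof (Rle_abs (- (a - b))). rewrite Rabs_Ropp in *. lra.
Qed.

Lemma Rabs_IZR_le_1 (z : Z) : (-1 <= z <= 1)%Z -> Rabs (IZR z) <= 1.
Proof.
  intro H. apply Rabs_le.
  assert (IZR (-1) <= IZR z) by (apply IZR_le; lia).
  assert (IZR z <= IZR 1) by (apply IZR_le; lia). simpl in *. lra.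
Qed.

Section PowerProducts.

Variable G : Group.

Definition all_commute (l : list G) : Prop := forall x y, In x l -> In y l -> gcommute G x y.

Definition pow_prod (l : list (G * R)) (f : G * R -> Z) : G :=
  prod_list (map (fun p => gpow (fst p) (f p)) l).

Definition floor_pow_prod (l : list (G * R)) (x : R) : G :=
  pow_prod l (fun p => Int_part (snd p * x)).

Lemma pow_prod_ext (l : list (G * R)) f f' : (forall p, f p = f' p) -> pow_prod l f = pow_prod l f'.
Proof. intro H. unfold pow_prod. f_equal. apply map_ext. intro a. now rewrite H. Qed.

Lemma pow_prod_add (l : list (G * R)) f f' : all_commute (map fst l) ->
  pow_prod l (fun p => (f p + f' p)%Z) = gmul (pow_prod l f) (pow_prod l f').
Proof.
  unfold pow_prod. induction l as [|p l IH]; intro Hc; simpl.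
  - rewrite gmul1l; reflexivity.
  - rewrite IH by (intros x y Hx Hy; apply Hc; simpl; auto). rewrite gpow_add.
    assert (Hcm : gcommute G (gpow (fst p) (f' p)) (prod_list (map (fun q => gpow (fst q) (f q)) l))).
    { apply gcommute_sym, gcommute_prod. intros y Hy. apply in_map_iff in Hy.
      destruct Hy as (q & <- & Hq). apply gcommute_pow, Hc; simpl; auto.
      right. now apply in_map. }
    rewrite <- !gmulA. f_equal. rewrite !gmulA, Hcm. reflexivity.
Qed.

Lemma pow_prod_opp (l : list (G * R)) f : all_commute (map fst l) ->
  pow_prod l (fun p => (- f p)%Z) = ginv (pow_prod l f).
Proof.
  intro Hc. apply ginv_unique. rewrite <- pow_prod_add by auto.
  rewrite (pow_prod_ext l _ (fun _ => 0%Z)) by (intro; ring).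
  clear Hc. unfold pow_prod. induction l; simpl in *; auto.
  rewrite IHl, gmul1l. reflexivity.
Qed.

Definition conj_pairs (cl : list (G * (G * R))) : list (G * R) :=
  map (fun q => (gconj G (fst q) (fst (snd q)), snd (snd q))) cl.

Variable nu : G -> R.
Hypothesis Hnu : conj_inv_pseudo_norm G nu.

Lemma nu_ge0 x : 0 <= nu x.
Proof. destruct Hnu as (H & _); auto. Qed.
Lemma nu_one : nu gone = 0.
Proof. destruct Hnu as (_ & H & _); auto. Qed.
Lemma nu_inv x : nu (ginv x) = nu x.
Proof. destruct Hnu as (_ & _ & H & _); auto. Qed.
Lemma nu_mul x y : nu (gmul x y) <= nu x + nu y.
Proof. destruct Hnu as (_ & _ & _ & H & _); auto. Qed.
Lemma nu_conj c x : nu (gconj G c x) = nu x.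
Proof. destruct Hnu as (_ & _ & _ & _ & H); auto. Qed.

Lemma nu_mul_l_dist e w : Rabs (nu (gmul e w) - nu w) <= nu e.
Proof.
  apply Rabs_le. pose proof (nu_mul e w).
  pose proof (nu_mul (ginv e) (gmul e w)) as Hw.
  rewrite gmulVK, nu_inv in Hw. lra.
Qed.

Lemma nu_pow (x : G) z : nu (gpow x z) <= Rabs (IZR z) * nu x.
Proof.
  assert (Hnat : forall y n, nu (gpow_nat G y n) <= INR n * nu y).
  { intros y n; induction n; simpl gpow_nat.
    - rewrite nu_one. simpl; lra.
    - rewrite S_INR. pose proof (nu_mul y (gpow_nat G y n)). lra. }
  destruct (Z_le_gt_dec 0 z) as [Hz|Hz].
  - rewrite gpow_nonneg by auto. rewrite Rabs_right by (apply Rle_ge, IZR_le; auto).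
    replace (IZR z) with (INR (Z.to_nat z)) by (rewrite INR_IZR_INZ, Z2Nat.id by lia; reflexivity).
    apply Hnat.
  - rewrite gpow_nonpos by lia. rewrite Rabs_left, <- opp_IZR by (apply IZR_lt; lia).
    replace (IZR (- z)) with (INR (Z.to_nat (- z))) by (rewrite INR_IZR_INZ, Z2Nat.id by lia; reflexivity).
    rewrite <- (nu_inv x). apply Hnat.
Qed.

Lemma nu_pow_prod_le (l : list (G * R)) f :
  nu (pow_prod l f) <= sumR l (fun p => Rabs (IZR (f p)) * nu (fst p)).
Proof.
  unfold pow_prod. induction l; simpl.
  - rewrite nu_one; lra.
  - pose proof (nu_mul (gpow (fst a) (f a)) (prod_list (map (fun p => gpow (fst p) (f p)) l))).
    pose proof (nu_pow (fst a) (f a)). lra.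
Qed.

Lemma nu_pow_prod_perturb (l : list (G * R)) f e t : all_commute (map fst l) ->
  (forall p, Rabs (IZR (e p)) <= t * Rabs (snd p) + 1) ->
  nu (pow_prod l (fun p => (f p + e p)%Z)) <=
  nu (pow_prod l f) + t * sumR l (fun p => Rabs (snd p) * nu (fst p)) + sumR l (fun p => nu (fst p)).
Proof.
  intros Hc He. rewrite pow_prod_add by auto.
  enough (nu (pow_prod l e) <=
            t * sumR l (fun p => Rabs (snd p) * nu (fst p)) + sumR l (fun p => nu (fst p)))
    by (pose proof (nu_mul (pow_prod l f) (pow_prod l e)); lra).
  eapply Rle_trans; [apply nu_pow_prod_le|]. clear Hc.
  induction l as [|a l IH]; simpl; [lra|].
  specialize (He a). pose proof (nu_ge0 (fst a)).
  assert (Rabs (IZR (e a)) * nu (fst a) <= (t * Rabs (snd a) + 1) * nu (fst a))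
    by (apply Rmult_le_compat_r; auto). nra.
Qed.

Lemma floor_pow_prod_quasi_regular (l : list (G * R)) : all_commute (map fst l) ->
  quasi_regular (fun x => nu (floor_pow_prod l x))
    (sumR l (fun p => Rabs (snd p) * nu (fst p))) (sumR l (fun p => nu (fst p))).
Proof.
  intro Hc. unfold floor_pow_prod.
  pose proof (sumR_ge0 l (fun p => Rabs (snd p) * nu (fst p))
                (fun p => Rmult_le_pos _ _ (Rabs_pos _) (nu_ge0 _))).
  split; [|split].
  - intros x y.
    rewrite (pow_prod_ext l _ (fun p => (Int_part (snd p * x) + Int_part (snd p * y)
               + (Int_part (snd p * x + snd p * y) - Int_part (snd p * x) - Int_part (snd p * y)))%Z))
      by (intro p; rewrite Rmult_plus_distr_l; ring).
    eapply Rle_trans; [apply (nu_pow_prod_perturb _ _ _ 0); auto|].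
    { intro p. rewrite Rmult_0_l, Rplus_0_l. apply Rabs_IZR_le_1.
      pose proof (Int_part_add_bounds (snd p * x) (snd p * y)). lia. }
    rewrite pow_prod_add by auto.
    pose proof (nu_mul (pow_prod l (fun p => Int_part (snd p * x)))
                       (pow_prod l (fun p => Int_part (snd p * y)))). lra.
  - intros x y.
    rewrite (pow_prod_ext l _ (fun p => (Int_part (snd p * y)
               + (Int_part (snd p * x) - Int_part (snd p * y)))%Z)) by (intro; ring).
    eapply Rle_trans; [apply (nu_pow_prod_perturb _ _ _ (Rabs (x - y))); auto|].
    + intro p. eapply Rle_trans; [apply Int_part_sub_le|].
      rewrite <- Rmult_minus_distr_l, Rabs_mult. lra.
    + rewrite (Rmult_comm (sumR _ _)). lra.
  - intro x.
    rewrite (pow_prod_ext l _ (fun p => (- Int_part (snd p * x)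
               + (Int_part (- (snd p * x)) + Int_part (snd p * x)))%Z))
      by (intro p; rewrite Ropp_mult_distr_r; ring).
    eapply Rle_trans; [apply (nu_pow_prod_perturb _ _ _ 0); auto|].
    { intro p. rewrite Rmult_0_l, Rplus_0_l. apply Rabs_IZR_le_1.
      pose proof (Int_part_opp_bounds (snd p * x)). lia. }
    rewrite pow_prod_opp, nu_inv by auto. lra.
Qed.

Lemma prod_conj_factor {A : Type} (l : list A) (c y : A -> G) :
  exists e, prod_list (map (fun a => gconj G (c a) (y a)) l) = gmul e (prod_list (map y l)) /\
    nu e <= 2 * sumR l (fun a => nu (c a)).
Proof.
  induction l as [|a l IH]; simpl.
  - exists gone. rewrite gmul1l, nu_one. split; auto; lra.
  - destruct IH as (e & He & Hne).
    (* c y c^-1 (e Y) = (c y c^-1 y^-1) (y e y^-1) (y Y), and nu (c y c^-1 y^-1) <= 2 nu c. *)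
    exists (gmul (gmul (gconj G (c a) (y a)) (ginv (y a))) (gconj G (y a) e)). split.
    + rewrite He. unfold gconj. rewrite <- !gmulA, !gmulVK. reflexivity.
    + assert (nu (gmul (gconj G (c a) (y a)) (ginv (y a))) <= 2 * nu (c a)).
      { unfold gconj. rewrite <- !gmulA. eapply Rle_trans; [apply nu_mul|].
        rewrite gmulA. fold (gconj G (y a) (ginv (c a))). rewrite nu_conj, nu_inv. lra. }
      pose proof (nu_mul (gmul (gconj G (c a) (y a)) (ginv (y a))) (gconj G (y a) e)).
      rewrite nu_conj in *. lra.
Qed.

Lemma floor_pow_prod_conj_dist (cl : list (G * (G * R))) (x : R) :
  Rabs (nu (floor_pow_prod (map snd cl) x) - nu (floor_pow_prod (conj_pairs cl) x))
    <= 2 * sumR cl (fun q => nu (fst q)).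
Proof.
  destruct (prod_conj_factor cl fst (fun q => gpow (fst (snd q)) (Int_part (snd (snd q) * x))))
    as (e & He & Hne).
  assert (Hconj : floor_pow_prod (conj_pairs cl) x = gmul e (floor_pow_prod (map snd cl) x)).
  { unfold floor_pow_prod, pow_prod, conj_pairs. rewrite !map_map, <- He.
    f_equal. apply map_ext. intro q. apply gconj_pow. }
  rewrite Hconj, Rabs_minus_sym. eapply Rle_trans; [apply nu_mul_l_dist | exact Hne].
Qed.

End PowerProducts.

Section FMConjugators.

Variables (G : Group) (H : G -> Prop).

Definition generated (K : G -> Prop) (z : G) : Prop :=
  exists xs, Forall K xs /\ z = prod_list xs.

Lemma generated_mono (K K' : G -> Prop) z :
  (forall x, K x -> K' x) -> generated K z -> generated K' z.
Proof.
  intros HK (xs & Hxs & ->). exists xs. split; auto.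
  rewrite Forall_forall in *. auto.
Qed.

Lemma generated_commute (K K' : G -> Prop) a b :
  (forall x y, K x -> K' y -> gcommute G x y) ->
  generated K a -> generated K' b -> gcommute G a b.
Proof.
  intros HK (xs & Hxs & ->) (ys & Hys & ->). rewrite Forall_forall in *.
  apply gcommute_prod. intros x Hx. apply gcommute_sym, gcommute_prod. intros y Hy.
  apply gcommute_sym. auto.
Qed.

Lemma in_conj_union_app_l (hs hs' : list G) y :
  in_conj_union G H hs y -> in_conj_union G H (hs ++ hs') y.
Proof. intros (g & Hg & z & Hz & ->). exists g. split; [apply in_or_app; auto | eauto]. Qed.

Lemma in_conj_union_app_r (hs hs' : list G) y :
  in_conj_union G H hs' y -> in_conj_union G H (hs ++ hs') y.
Proof. intros (g & Hg & z & Hz & ->). exists g. split; [apply in_or_app; auto | eauto]. Qed.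

Lemma generated_conj (hs : list G) psi z : generated (in_conj_union G H hs) z ->
  generated (in_conj_union G H (map (gmul psi) hs)) (gconj G psi z).
Proof.
  intros (xs & Hxs & ->). exists (map (gconj G psi) xs). split; [|apply gconj_prod].
  rewrite Forall_forall in *. intros y Hy. apply in_map_iff in Hy. destruct Hy as (x & <- & Hx).
  destruct (Hxs x Hx) as (g & Hg & w & Hw & ->). exists (gmul psi g). split.
  - apply in_map; auto.
  - exists w. split; auto. apply gconj_conj.
Qed.

Lemma nuH_finite_generated : (forall f, nuH_finite_at G H f) ->
  forall l : list G, exists hs, forall g, In g l -> generated (in_conj_union G H hs) g.
Proof.
  intros Hfin l. induction l as [|g l IH].
  - exists nil. intros g [].
  - destruct IH as [hs Hhs]. destruct (Hfin g) as (cs & Hcs & Hg).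
    exists (map fst cs ++ hs). intros g' [<-|Hg'].
    + exists (map (fun p => gconj G (fst p) (snd p)) cs). split; auto.
      rewrite Forall_forall in *. intros y Hy. apply in_map_iff in Hy. destruct Hy as (p & <- & Hp).
      apply in_conj_union_app_l. exists (fst p). split; [apply in_map; auto|]. eauto.
    + eapply generated_mono; [|apply Hhs; auto]. intros; apply in_conj_union_app_r; auto.
Qed.

(* Each new element is conjugated by an element of D^f_H for the conjugates generating the
   previously placed ones, so that it commutes with all of them. *)
Lemma conjugators_exist (hs : list G) h0 :
  in_Df G H (in_conj_union G H hs) h0 ->
  forall l : list (G * R), (forall p, In p l -> generated (in_conj_union G H hs) (fst p)) ->
  exists cl, map snd cl = l /\ exists acc, all_commute G (map fst (conj_pairs G cl)) /\
    forall q, In q (conj_pairs G cl) -> generated (in_conj_union G H acc) (fst q).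
Proof.
  intros Hd l. induction l as [|p l IH]; intro Hl.
  - exists nil. split; auto. exists nil. split; [intros ? ? [] | intros ? []].
  - destruct IH as (cl & Hcl & acc & Hc & Hacc). { intros; apply Hl; simpl; auto. }
    destruct (Hd acc) as [h Hh]. set (psi := gconj G h h0).
    assert (Hnew : generated (in_conj_union G H (map (gmul psi) hs)) (gconj G psi (fst p))).
    { apply generated_conj, Hl; simpl; auto. }
    assert (Hcomm : forall q, In q (conj_pairs G cl) -> gcommute G (gconj G psi (fst p)) (fst q)).
    { intros q Hq.
      apply (generated_commute (fun z => exists x, in_conj_union G H hs x /\ z = gconj G psi x)
               (in_conj_union G H acc)).
      - intros x y (x0 & Hx0 & ->) Hy. apply Hh; auto.
      - destruct (Hl p (or_introl eq_refl)) as (xs & Hxs & ->). rewrite gconj_prod.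
        exists (map (gconj G psi) xs). split; auto. rewrite Forall_forall in *.
        intros y Hy. apply in_map_iff in Hy. destruct Hy as (x & <- & Hx). eauto.
      - apply Hacc; auto. }
    exists ((psi, p) :: cl). split; [simpl; congruence|].
    exists (map (gmul psi) hs ++ acc). split.
    + intros a b [<-|Ha] [<-|Hb].
      * reflexivity.
      * apply in_map_iff in Hb. destruct Hb as (q & <- & Hq). apply Hcomm; auto.
      * apply in_map_iff in Ha. destruct Ha as (q & <- & Hq). apply gcommute_sym, Hcomm; auto.
      * apply Hc; auto.
    + intros q [<-|Hq]; simpl.
      * eapply generated_mono; [|apply Hnew]. intros; apply in_conj_union_app_l; auto.
      * eapply generated_mono; [|apply Hacc; auto]. intros; apply in_conj_union_app_r; auto.
Qed.

Lemma FM_commuting_conjugates : FM_pair G H ->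
  forall l : list (G * R), exists cl, map snd cl = l /\ all_commute G (map fst (conj_pairs G cl)).
Proof.
  intros (_ & Hfin & Hdf) l.
  destruct (nuH_finite_generated Hfin (map fst l)) as [hs Hhs].
  destruct (Hdf hs) as [h0 Hh0].
  destruct (conjugators_exist hs h0 Hh0 l) as (cl & Hcl & _ & Hc & _).
  - intros p Hp. apply Hhs, in_map, Hp.
  - exists cl. auto.
Qed.

End FMConjugators.

Theorem lemma3p4 (G : Group) (nu : G -> R)
  (Hnu : conj_inv_pseudo_norm G nu) (HFM : FM G)
  (gs : list (G * R)) (lam : R) :
  exists L : R,
    Un_cv (fun n : nat =>
      nu (prod_list (map (fun p => gpow (fst p) (Int_part (snd p * INR n))) gs)) / INR n) L /\
    Un_cv (fun n : nat =>
      nu (prod_list (map (fun p => gpow (fst p) (Int_part (lam * snd p * INR n))) gs)) / INR n)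
      (Rabs lam * L).
Proof.
  destruct HFM as [H HFMH].
  destruct (FM_commuting_conjugates G H HFMH gs) as (cl & <- & Hc).
  set (g := fun x => nu (floor_pow_prod G (map snd cl) x)).
  assert (Hreg : quasi_regular g
            (sumR (conj_pairs G cl) (fun p => Rabs (snd p) * nu (fst p)))
            (sumR (conj_pairs G cl) (fun p => nu (fst p)) + 3 * (2 * sumR cl (fun q => nu (fst q))))).
  { apply (quasi_regular_near (fun x => nu (floor_pow_prod G (conj_pairs G cl) x))).
    - apply floor_pow_prod_quasi_regular; auto.
    - apply floor_pow_prod_conj_dist; auto. }
  assert (HK : 0 <= sumR (conj_pairs G cl) (fun p => Rabs (snd p) * nu (fst p))).
  { apply sumR_ge0. intro. apply Rmult_le_pos; [apply Rabs_pos | apply nu_ge0; auto]. }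
  destruct (quasi_regular_limits g _ _ (fun x => nu_ge0 G nu Hnu _) HK Hreg) as [L HL].
  exists L. split.
  - rewrite <- (Rmult_1_l L), <- Rabs_R1. apply (Un_cv_ext _ _) with (2 := HL 1).
    intro n. unfold g. rewrite Rmult_1_l. reflexivity.
  - apply (Un_cv_ext _ _) with (2 := HL lam).
    intro n. unfold g, floor_pow_prod, pow_prod. do 3 f_equal.
    apply map_ext. intro p. do 2 f_equal. ring.
Qed.
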